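(* Let $w_1,\dots,w_N\in\mathbb{R}^d$, let $\mathcal{V}$ be a linear subspace of $\mathbb{S}^d$, and let $\mathcal{C}^*=\{\sum_{i=1}^N\lambda_iw_iw_i^T:\lambda_i\ge0\}$. Consider the linear program in the variables $X\in\mathbb{S}^d$, $\lambda,t\in\mathbb{R}^N$: $$\text{maximize }\sum_{i=1}^Nt_i\ \text{ subject to } X\in\mathcal{V},\ X=\sum_{i=1}^N\lambda_iw_iw_i^T,\ \lambda_i\ge t_i,\ 1\ge t_i\ge0\ (i=1,\dots,N).$$ For any optimal solution $(X,\lambda,t)$, $X\in\mathcal{V}\cap\mathcal{C}^*$ and $\operatorname{rank}X\ge\operatorname{rank}Y$ for all $Y\in\mathcal{V}\cap\mathcal{C}^*$.
   Context: $\mathbb{S}^d$ denotes the space of real symmetric $d\times d$ matrices. *)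

From HB Require Import structures.
From mathcomp Require Import all_boot all_order all_algebra.
Set Implicit Arguments. Unset Strict Implicit. Unset Printing Implicit Defensive.
Import Order.TTheory GRing.Theory Num.Theory.
Local Open Scope ring_scope.

Definition symmetric_mx (R : ringType) (d : nat) (A : 'M[R]_d) : Prop := A^T = A.

Definition wsum (R : comRingType) (d N : nat) (w : 'I_N -> 'cV[R]_d)
  (lam : 'I_N -> R) : 'M[R]_d :=
  \sum_(i < N) lam i *: (w i *m (w i)^T).

Definition in_cone (R : realFieldType) (d N : nat) (w : 'I_N -> 'cV[R]_d)
  (Y : 'M[R]_d) : Prop :=
  exists lam : 'I_N -> R, (forall i, 0 <= lam i) /\ Y = wsum w lam.

Definition lp_feasible (R : realFieldType) (d N : nat) (w : 'I_N -> 'cV[R]_d)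
  (V : {vspace 'M[R]_d}) (X : 'M[R]_d) (lam t : 'I_N -> R) : Prop :=
  [/\ X \in V, X = wsum w lam,
      (forall i, t i <= lam i) & (forall i, 0 <= t i <= 1)].

Definition lp_optimal (R : realFieldType) (d N : nat) (w : 'I_N -> 'cV[R]_d)
  (V : {vspace 'M[R]_d}) (X : 'M[R]_d) (lam t : 'I_N -> R) : Prop :=
  lp_feasible w V X lam t /\
  forall (X' : 'M[R]_d) (lam' t' : 'I_N -> R),
    lp_feasible w V X' lam' t' -> \sum_(i < N) t' i <= \sum_(i < N) t i.

From HB Require Import structures.
From mathcomp Require Import all_boot all_order all_algebra.
From mathcomp Require Import lra zify.
Set Implicit Arguments. Unset Strict Implicit. Unset Printing Implicit Defensive.
Import Order.TTheory GRing.Theory Num.Theory.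
Local Open Scope ring_scope.

(* If (X, lam, t) is optimal and Y = sum_i mu_i w_i w_i^T lies in V with mu >= 0,
   then mu_j > 0 forces lam_j > 0: otherwise (X + Y / mu_j, lam + mu / mu_j) is
   feasible with t_j raised from 0 to 1, contradicting optimality.  Hence the
   support of mu is contained in that of lam, so every row vector u annihilating
   X = sum_i lam_i w_i w_i^T satisfies u w_i = 0 whenever lam_i > 0 (the
   quadratic form u X u^T is a nonnegative combination of the (u w_i)^2), and
   therefore also annihilates Y.  The kernel of X thus lies in that of Y, which
   gives rank Y <= rank X. *)

Lemma mxrank_kermx_subr (F : fieldType) (m n p : nat)
  (A : 'M[F]_(m, n)) (B : 'M[F]_(m, p)) :
  (kermx A <= kermx B)%MS -> (\rank B <= \rank A)%N.
Proof.
move/mxrankS; rewrite !mxrank_ker.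
by have := rank_leq_row A; have := rank_leq_row B; lia.
Qed.

Section Wsum.

Variables (R : realFieldType) (d N : nat) (w : 'I_N -> 'cV[R]_d).

Lemma wsumDZ (lam mu : 'I_N -> R) (c : R) :
  wsum w (fun i => lam i + c * mu i) = wsum w lam + c *: wsum w mu.
Proof.
rewrite /wsum scaler_sumr -big_split /=; apply: eq_bigr => i _.
by rewrite scalerDl scalerA.
Qed.

Lemma mulmx_wsumr (lam : 'I_N -> R) (u : 'rV[R]_d) :
  u *m wsum w lam = \sum_(i < N) (lam i * (u *m w i) 0 0) *: (w i)^T.
Proof.
rewrite /wsum mulmx_sumr; apply: eq_bigr => i _.
rewrite -scalemxAr mulmxA; set c := (u *m w i) 0 0.
by rewrite [u *m w i]mx11_scalar mul_scalar_mx scalerA.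
Qed.

Lemma wsum_quad_form (lam : 'I_N -> R) (u : 'rV[R]_d) :
  (u *m wsum w lam *m u^T) 0 0 = \sum_(i < N) lam i * ((u *m w i) 0 0) ^+ 2.
Proof.
rewrite mulmx_wsumr mulmx_suml summxE; apply: eq_bigr => i _.
rewrite -scalemxAl mxE -trmx_mul; set c := (u *m w i) 0 0.
by rewrite [u *m w i]mx11_scalar tr_scalar_mx mxE eqxx mulr1n expr2 mulrA.
Qed.

Lemma wsum_ker_orth (lam : 'I_N -> R) (u : 'rV[R]_d) (i : 'I_N) :
  (forall j, 0 <= lam j) -> u *m wsum w lam = 0 -> 0 < lam i ->
  (u *m w i) 0 0 = 0.
Proof.
move=> lam_ge0 uX0 lam_i_gt0.
have quad0 : \sum_(j < N) lam j * ((u *m w j) 0 0) ^+ 2 = 0.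
  by rewrite -wsum_quad_form uX0 mul0mx mxE.
have := psumr_eq0P (fun j _ => mulr_ge0 (lam_ge0 j) (sqr_ge0 _)) quad0.
by move/(_ i isT)/eqP; rewrite mulf_eq0 (gt_eqF lam_i_gt0) expf_eq0 /= => /eqP.
Qed.

Lemma wsum_kermx_sub (lam mu : 'I_N -> R) :
  (forall i, 0 <= lam i) -> (forall i, mu i != 0 -> 0 < lam i) ->
  (kermx (wsum w lam) <= kermx (wsum w mu))%MS.
Proof.
move=> lam_ge0 supp; apply/row_subP => k; rewrite sub_kermx.
have /eqP uX0 : row k (kermx (wsum w lam)) *m wsum w lam == 0.
  by rewrite -sub_kermx row_sub.
rewrite mulmx_wsumr; apply/eqP/big1 => i _.
have [->|mu_i_nz] := eqVneq (mu i) 0; first by rewrite mul0r scale0r.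
by rewrite (wsum_ker_orth lam_ge0 uX0 (supp i mu_i_nz)) mulr0 scale0r.
Qed.

End Wsum.

Section OptimalSolution.

Variables (R : realFieldType) (d N : nat) (w : 'I_N -> 'cV[R]_d).
Variables (V : {vspace 'M[R]_d}) (X : 'M[R]_d) (lam t : 'I_N -> R).
Hypothesis opt : lp_optimal w V X lam t.

Lemma lp_optimal_lam_ge0 i : 0 <= lam i.
Proof.
case: opt => -[_ _ t_le_lam t01] _.
by apply: le_trans (t_le_lam i); case/andP: (t01 i).
Qed.

Lemma lp_optimal_support (mu : 'I_N -> R) (j : 'I_N) :
  (forall i, 0 <= mu i) -> wsum w mu \in V -> mu j != 0 -> 0 < lam j.
Proof.
case: opt => -[XV Xe t_le_lam t01] opt_sum mu_ge0 YV mu_j_nz.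
rewrite lt_def lp_optimal_lam_ge0 andbT; apply/negP => /eqP lam_j0.
have t_j0 : t j = 0.
  by apply/le_anti; rewrite -{1}lam_j0 t_le_lam; case/andP: (t01 j).
have mu_j_gt0 : 0 < mu j by rewrite lt_def mu_j_nz mu_ge0.
pose t' i := t i + (i == j)%:R.
have feas : lp_feasible w V (X + (mu j)^-1 *: wsum w mu)
                            (fun i => lam i + (mu j)^-1 * mu i) t'.
  split.
  - by rewrite memvD // memvZ.
  - by rewrite wsumDZ Xe.
  - move=> i; rewrite /t'; have [->|_] := eqVneq i j.
      by rewrite t_j0 lam_j0 mulVf ?(gt_eqF mu_j_gt0) // add0r.
    by rewrite addr0 -[t i]addr0 lerD // mulr_ge0 // invr_ge0 ltW.
  - move=> i; rewrite /t'; have [->|_] := eqVneq i j; last by rewrite addr0.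
    by rewrite t_j0 add0r ler01 lexx.
have sum_delta : \sum_(i < N) ((i == j)%:R : R) = 1.
  by rewrite (bigD1 j) //= eqxx big1 ?addr0 // => i /negbTE ->.
by have := opt_sum _ _ _ feas; rewrite /t' big_split /= sum_delta; lra.
Qed.

End OptimalSolution.

Theorem corollary3 (R : realFieldType) (d N : nat) (w : 'I_N -> 'cV[R]_d)
  (V : {vspace 'M[R]_d})
  (hV : forall A : 'M[R]_d, A \in V -> symmetric_mx A)
  (X : 'M[R]_d) (lam t : 'I_N -> R) :
  lp_optimal w V X lam t ->
  X \in V /\ in_cone w X /\
  (forall Y : 'M[R]_d, Y \in V -> in_cone w Y -> (\rank Y <= \rank X)%N).
Proof.
move=> opt; have [[XV Xe _ _] _] := opt.
split=> //; split; first by exists lam; split=> //; exact: lp_optimal_lam_ge0 opt.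
move=> Y YV [mu [mu_ge0 Ye]]; subst X Y.
apply/mxrank_kermx_subr/wsum_kermx_sub; first exact: lp_optimal_lam_ge0 opt.
by move=> i; apply: (lp_optimal_support (mu := mu) opt).
Qed.
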